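(* Consider a network as described in the context with $\Delta_{ij}>0$ for all $i\ne j$, and let $r=1+\big\lfloor \max_i\theta_i/\min_{i\ne j}\Delta_{ij}\big\rfloor$. Suppose the initial state satisfies $S_i(x_i(0))\in[0,\theta_i)$ for all $i$, and that the spiking instants $t_0<t_1<\dots<t_{r-1}$ exist. Then every cell $j\in\{1,\dots,m\}$ belongs to at least one of the coalitions $I(t_0),I(t_1),\dots,I(t_{r-1})$. That is, every cell spikes at least once during $[0,t_{r-1}]$.
   Context: Network model. Fix an integer $m\ge 2$ (the number of units, or cells). For each $i\in\{1,\dots,m\}$ the following data are given. - $X_i$ is a compact finite-dimensional smooth manifold. - $f_i$ is a continuous vector field on $X_i$. - $S_i:X_i\to\mathbb R$ is a $C^1$ function, called the satisfaction level. - $\theta_i>0$ is a constant, called the goal. These are required to satisfy: there is $v_i>0$ with $\nabla S_i(x)\cdot f_i(x)>v_i$ for every $x\in X_i$ with $S_i(x)<\theta_i$. Real interaction weights $\Delta_{ij}$ are given for $i\ne j$. The global state $\mathbf x(t)=(x_1(t),\dots,x_m(t))\in\prod_i X_i$, $t\ge 0$, evolves as follows. Spiking instants $0\le t_0<t_1<\cdots$ are the instants at which at least one cell spikes. Between consecutive spiking instants each $x_i$ evolves independently by $dx_i/dt=f_i(x_i)$. At an instant $t_n$, write $S_j(x_j(t_n^-))=\lim_{t\to t_n^-}S_j(x_j(t))$. The coalition is $I(t_n)=\bigcup_{p\ge 0}I_p(t_n)$, where: - $I_0(t_n)$ is the set of cells $i$ with $S_i(x_i(t_n^-))\ge\theta_i$;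 - for $p\ge1$, $I_p(t_n)$ is the set of cells $j\notin\bigcup_{k<p}I_k(t_n)$ with $S_j(x_j(t_n^-))+\sum_{k<p}\sum_{i\in I_k(t_n)}\Delta_{ij}\ge\theta_j$. The spiking instants are exactly the instants with $I_0(t_n)\neq\emptyset$, and the cells in $I(t_n)$ are said to spike at $t_n$. At $t_n$ the state jumps as follows: - for $j\in I(t_n)$, $x_j(t_n)$ is a point with $S_j(x_j(t_n))=0$; - for $j\notin I(t_n)$, $x_j(t_n)$ is a point with $S_j(x_j(t_n))=S_j(x_j(t_n^-))+\sum_{i\in I(t_n),\,i\ne j}\Delta_{ij}$. Initial states are assumed to satisfy $S_i(x_i(0))\in[0,\theta_i)$ for all $i$. The network is cooperative if $\Delta_{ij}\ge 0$ for all $i\ne j$. A cooperative network is large enough if $\sqrt m\ge 1+\frac{\max_i\theta_i}{\min_{i\ne j}\Delta_{ij}}$; in particular this requires $\Delta_{ij}>0$ for all $i\ne j$. The grand coalition is exhibited at $t_n$ if $I(t_n)=\{1,\dots,m\}$. *)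

From Stdlib Require Import Reals Lra Lia ZArith List ClassicalEpsilon.
Import ListNotations.
Open Scope R_scope.

(* Cells are indexed by 0, ..., m-1 (the paper uses 1, ..., m). *)

Definition Rleb (x y : R) : bool := if Rle_dec x y then true else false.

Definition sum_upto (m : nat) (F : nat -> R) : R :=
  fold_right Rplus 0 (map F (seq 0 m)).

(* Coalition layers at a spiking instant, given the left-limit
   satisfaction levels [pre j] = S_j(x_j(t_n^-)).
   [before p j]  <->  j \in I_0 \cup ... \cup I_(p-1)
   [layer p j]   <->  j \in I_p  where
     I_p = { j not in I_0..I_(p-1) |
             pre j + sum_{k<p} sum_{i in I_k} Delta i j >= theta j }.
   For p = 0 the union is empty and the sum is 0, so this is the paper's I_0. *)
Fixpoint before (m : nat) (theta : nat -> R) (Delta : nat -> nat -> R)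
  (pre : nat -> R) (p : nat) (j : nat) : bool :=
  match p with
  | O => false
  | S p' =>
      before m theta Delta pre p' j
      || (negb (before m theta Delta pre p' j)
          && Rleb (theta j)
               (pre j + sum_upto m (fun i =>
                   if before m theta Delta pre p' i then Delta i j else 0)))
  end.

Definition layer (m : nat) (theta : nat -> R) (Delta : nat -> nat -> R)
  (pre : nat -> R) (p : nat) (j : nat) : bool :=
  negb (before m theta Delta pre p j)
  && Rleb (theta j)
       (pre j + sum_upto m (fun i =>
           if before m theta Delta pre p i then Delta i j else 0)).

Definition coalition (m : nat) (theta : nat -> R) (Delta : nat -> nat -> R)
  (pre : nat -> R) (j : nat) : Prop :=
  exists p : nat, layer m theta Delta pre p j = true.

Definition theta_max (m : nat) (theta : nat -> R) : R :=
  fold_right Rmax (theta 0%nat) (map theta (seq 0 m)).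

Definition off_diag_pairs (m : nat) : list (nat * nat) :=
  flat_map (fun i => map (fun j => (i, j))
                       (filter (fun j => negb (Nat.eqb i j)) (seq 0 m)))
           (seq 0 m).

(* min_{i <> j} Delta_ij  (m >= 2, so (0,1) is a genuine pair) *)
Definition delta_min (m : nat) (Delta : nat -> nat -> R) : R :=
  fold_right Rmin (Delta 0%nat 1%nat)
    (map (fun pr => Delta (fst pr) (snd pr)) (off_diag_pairs m)).

(* r = 1 + floor(max theta / min Delta);  Int_part x = up x - 1 = floor x *)
Definition r_bound (m : nat) (theta : nat -> R) (Delta : nat -> nat -> R) : nat :=
  S (Z.to_nat (Int_part (theta_max m theta / delta_min m Delta))).

Definition left_limit (s : R -> R) (a l : R) : Prop :=
  forall eps, 0 < eps -> exists delta, 0 < delta /\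
    forall t, a - delta < t < a -> Rabs (s t - l) < eps.

Definition right_cont (s : R -> R) (a : R) : Prop :=
  forall eps, 0 < eps -> exists delta, 0 < delta /\
    forall t, a < t < a + delta -> Rabs (s t - s a) < eps.

Definition coalition_input (m : nat) (theta : nat -> R) (Delta : nat -> nat -> R)
  (pre : nat -> R) (j : nat) : R :=
  sum_upto m (fun i =>
    if Nat.eqb i j then 0 else
    if excluded_middle_informative (coalition m theta Delta pre i)
    then Delta i j else 0).

(* Fix a cell j and suppose, for contradiction, that j belongs to none of the
   coalitions I(t_0), ..., I(t_(r-1)).  Two facts drive the argument.
   - Jump gain: at each t_n some cell fires (I_0(t_n) is nonempty), it lies in
     the coalition and differs from j, so the non-member j receives at least
     delta_min = min_{i<>j} Delta_ij on top of its left limit.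
   - Monotone flow: between spikes S_j has positive derivative, so its left
     limit at t_(n+1) is at least its value at t_n (and S_j(t_0^-) >= S_j(0)).
   Chaining these ("staircase") gives S_j(t_n) >= (n+1) delta_min, hence
   S_j(t_(r-1)) >= r delta_min > max theta.  But a non-member of the coalition
   stays strictly below its goal after the jump, since otherwise it would have
   been recruited into the last layer; this is the contradiction. *)

From Pilot Require Import Defs.
From Stdlib Require Import Reals List.
From Stdlib Require Import Lra Lia ZArith Classical ClassicalEpsilon.
From Coquelicot Require Import Coquelicot.
Open Scope R_scope.
Set Bullet Behavior "Strict Subproofs".

Lemma Rleb_true x y : Rleb x y = true <-> x <= y.
Proof. unfold Rleb; destruct (Rle_dec x y); split; intros; auto; try discriminate; lra. Qed.

Lemma Rleb_false x y : Rleb x y = false -> y < x.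
Proof. unfold Rleb; destruct (Rle_dec x y); intros; try discriminate; lra. Qed.

Lemma sum_upto_ext m (F G : nat -> R) :
  (forall i, (i < m)%nat -> F i = G i) -> sum_upto m F = sum_upto m G.
Proof.
  intros HFG; unfold sum_upto; f_equal; apply map_ext_in.
  intros i Hi; apply in_seq in Hi; apply HFG; lia.
Qed.

Lemma sum_upto_zero m : sum_upto m (fun _ => 0) = 0.
Proof.
  unfold sum_upto; induction (seq 0 m) as [|a l IH]; simpl; [reflexivity|].
  rewrite IH; lra.
Qed.

Lemma fold_sum_ge_term (F : nat -> R) l k :
  (forall i, In i l -> 0 <= F i) -> In k l ->
  F k <= fold_right Rplus 0 (map F l).
Proof.
  assert (Hnonneg : forall l', (forall i, In i l' -> 0 <= F i) ->
            0 <= fold_right Rplus 0 (map F l')).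
  { induction l' as [|a l' IH]; simpl; intros H; [lra|].
    assert (0 <= F a) by auto.
    assert (0 <= fold_right Rplus 0 (map F l')) by auto. lra. }
  induction l as [|a l IH]; simpl; intros H Hk; [contradiction|].
  destruct Hk as [<-|Hk].
  - assert (0 <= fold_right Rplus 0 (map F l)) by auto. lra.
  - assert (0 <= F a) by auto. assert (F k <= fold_right Rplus 0 (map F l)) by auto.
    lra.
Qed.

Lemma sum_upto_ge_term m (F : nat -> R) k :
  (forall i, (i < m)%nat -> 0 <= F i) -> (k < m)%nat -> F k <= sum_upto m F.
Proof.
  intros HF Hk; apply fold_sum_ge_term; [|apply in_seq; lia].
  intros i Hi; apply in_seq in Hi; apply HF; lia.
Qed.

Lemma fold_min_le (x0 : R) l x : In x l -> fold_right Rmin x0 l <= x.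
Proof.
  induction l as [|a l IH]; simpl; intros H; [contradiction|].
  destruct H as [<-|H]; [apply Rmin_l|].
  eapply Rle_trans; [apply Rmin_r|auto].
Qed.

Lemma fold_min_attained (x0 : R) l :
  fold_right Rmin x0 l = x0 \/ In (fold_right Rmin x0 l) l.
Proof.
  induction l as [|a l IH]; simpl; auto.
  destruct (Rle_dec a (fold_right Rmin x0 l)).
  - rewrite Rmin_left by auto. right; left; reflexivity.
  - rewrite Rmin_right by lra. destruct IH as [H|H]; [left|right; right]; exact H.
Qed.

Lemma fold_max_ge (x0 : R) l x : In x l -> x <= fold_right Rmax x0 l.
Proof.
  induction l as [|a l IH]; simpl; intros H; [contradiction|].
  destruct H as [<-|H]; [apply Rmax_l|].
  eapply Rle_trans; [apply IH; auto|apply Rmax_r].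
Qed.

Lemma off_diag_pairs_spec m i k :
  In (i, k) (off_diag_pairs m) <-> (i < m)%nat /\ (k < m)%nat /\ i <> k.
Proof.
  unfold off_diag_pairs; rewrite in_flat_map; split.
  - intros [i' [Hi' Hin]]; apply in_map_iff in Hin as [k' [Heq Hk']].
    injection Heq as <- <-. apply filter_In in Hk' as [Hk' Hne].
    apply in_seq in Hi'; apply in_seq in Hk'.
    apply Bool.negb_true_iff, Nat.eqb_neq in Hne. lia.
  - intros (Hi & Hk & Hne); exists i; split; [apply in_seq; lia|].
    apply in_map_iff; exists k; split; [reflexivity|].
    apply filter_In; split; [apply in_seq; lia|].
    apply Bool.negb_true_iff, Nat.eqb_neq; exact Hne.
Qed.

(* [delta_min] is a lower bound of the off-diagonal weights, and it is
   positive when all of them are (it is one of them, m >= 2 making the seed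
   Delta 0 1 genuine). *)
Lemma delta_min_le m Delta i k : (i < m)%nat -> (k < m)%nat -> i <> k ->
  delta_min m Delta <= Delta i k.
Proof.
  intros; unfold delta_min; apply fold_min_le, in_map_iff.
  exists (i, k); split; [reflexivity|]; apply off_diag_pairs_spec; auto.
Qed.

Lemma delta_min_pos m Delta : (2 <= m)%nat ->
  (forall i j, (i < m)%nat -> (j < m)%nat -> i <> j -> 0 < Delta i j) ->
  0 < delta_min m Delta.
Proof.
  intros Hm HD; unfold delta_min.
  destruct (fold_min_attained (Delta 0%nat 1%nat)
              (map (fun pr => Delta (fst pr) (snd pr)) (off_diag_pairs m)))
    as [->|Hin]; [apply HD; lia|].
  apply in_map_iff in Hin as [[i k] [<- Hpr]].
  apply off_diag_pairs_spec in Hpr as (? & ? & ?); apply HD; auto.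
Qed.

Lemma theta_max_ge m theta j : (j < m)%nat -> theta j <= theta_max m theta.
Proof. intros; apply fold_max_ge, in_map, in_seq; lia. Qed.

Lemma r_bound_spec m theta Delta :
  0 < delta_min m Delta -> 0 <= theta_max m theta ->
  theta_max m theta < INR (r_bound m theta Delta) * delta_min m Delta.
Proof.
  intros Hdm Htm; unfold r_bound; set (x := theta_max m theta / delta_min m Delta).
  assert (Hx : 0 <= x) by (apply Rmult_le_pos; [|apply Rlt_le, Rinv_0_lt_compat]; lra).
  destruct (base_Int_part x) as [Hfl Hup].
  assert (Hint : (0 <= Int_part x)%Z).
  { assert (Hgt : (-1 < Int_part x)%Z) by (apply lt_IZR; lra). lia. }
  assert (Hxr : x < INR (S (Z.to_nat (Int_part x)))).
  { rewrite S_INR, INR_IZR_INZ, Z2Nat.id by exact Hint; lra. }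
  assert (Hxd : theta_max m theta = x * delta_min m Delta) by (unfold x; field; lra).
  rewrite Hxd; apply Rmult_lt_compat_r; assumption.
Qed.

Section Coalition.
Variables (m : nat) (theta : nat -> R) (Delta : nat -> nat -> R) (pre : nat -> R).

Local Notation before := (Defs.before m theta Delta pre).
Local Notation layer := (Defs.layer m theta Delta pre).
Local Notation coalition := (Defs.coalition m theta Delta pre).

Lemma before_coalition p i : before p i = true -> coalition i.
Proof.
  induction p as [|p IH]; intros H; [discriminate|].
  apply Bool.orb_true_iff in H as [H|H]; [auto|exists p; exact H].
Qed.

Lemma before_mono p k i : before p i = true -> before (k + p) i = true.
Proof. induction k as [|k IH]; simpl; intros H; auto; rewrite IH; auto. Qed.

Lemma before_exhausts n : exists p, forall i, (i < n)%nat ->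
  coalition i -> before p i = true.
Proof.
  induction n as [|n [p Hp]]; [exists O; intros; lia|].
  destruct (classic (coalition n)) as [[q Hq]|Hn].
  - exists (p + S q)%nat; intros i Hi Hc.
    destruct (Nat.eq_dec i n) as [->|Hne].
    + apply before_mono; apply Bool.orb_true_iff; right; exact Hq.
    + rewrite Nat.add_comm; apply before_mono, Hp; auto; lia.
  - exists p; intros i Hi Hc; destruct (Nat.eq_dec i n) as [->|]; [contradiction|].
    apply Hp; auto; lia.
Qed.

Lemma above_goal_in_coalition i : theta i <= pre i -> coalition i.
Proof.
  intros H; exists O; apply Bool.andb_true_iff; split; [reflexivity|].
  apply Rleb_true; simpl; rewrite sum_upto_zero; lra.
Qed.

(* A cell outside the coalition ends strictly below its goal after receiving
   the input of the whole coalition: otherwise it would join the layer after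
   the one at which the layers stabilise. *)
Lemma outside_coalition_below_goal j : ~ coalition j ->
  pre j + coalition_input m theta Delta pre j < theta j.
Proof.
  intros Hj; destruct (before_exhausts m) as [p Hp].
  assert (Hbj : before p j = false).
  { destruct (before p j) eqn:E; auto; exfalso; eapply Hj, before_coalition, E. }
  assert (Hl : layer p j = false).
  { destruct (layer p j) eqn:E; auto; exfalso; apply Hj; exists p; exact E. }
  unfold Defs.layer in Hl; rewrite Hbj in Hl.
  apply Rleb_false in Hl; unfold coalition_input; erewrite sum_upto_ext; [exact Hl|].
  intros i Hi; destruct (Nat.eqb_spec i j) as [->|Hne]; [rewrite Hbj; auto|].
  destruct (excluded_middle_informative (coalition i)) as [c|c].
  - rewrite Hp; auto.
  - destruct (before p i) eqn:E; auto; exfalso; eapply c, before_coalition, E.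
Qed.

Lemma coalition_input_ge_delta_min j : (j < m)%nat ->
  (forall i k, (i < m)%nat -> (k < m)%nat -> i <> k -> 0 <= Delta i k) ->
  (exists i, (i < m)%nat /\ theta i <= pre i) -> ~ coalition j ->
  delta_min m Delta <= coalition_input m theta Delta pre j.
Proof.
  intros Hj HD [i0 [Hi0 Hfire]] Hnj.
  assert (Hc0 : coalition i0) by (apply above_goal_in_coalition; exact Hfire).
  assert (Hne : i0 <> j) by (intros ->; contradiction).
  set (F := fun i => if Nat.eqb i j then 0 else
              if excluded_middle_informative (coalition i) then Delta i j else 0).
  assert (HF0 : F i0 = Delta i0 j).
  { unfold F; destruct (Nat.eqb_spec i0 j); [contradiction|].
    destruct (excluded_middle_informative _); tauto. }
  apply Rle_trans with (Delta i0 j); [apply delta_min_le; auto|].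
  rewrite <- HF0; apply sum_upto_ge_term; [|exact Hi0].
  intros i Hi; unfold F; destruct (Nat.eqb_spec i j); [lra|].
  destruct (excluded_middle_informative _); [apply HD; auto|lra].
Qed.

End Coalition.

Lemma increasing_flow_le_left_limit f a b L : a < b ->
  right_cont f a -> left_limit f b L ->
  (forall t, a < t < b -> exists d, derivable_pt_lim f t d /\ 0 < d) -> f a <= L.
Proof.
  intros Hab Hr Hl Hd.
  assert (Hinc : forall x y, a < x -> x < y -> y < b -> f x < f y).
  { intros x y Hx Hxy Hy.
    apply (incr_function f (Finite a) (Finite b) (fun t => Derive f t)); simpl; auto;
      intros t H1 H2; destruct (Hd t (conj H1 H2)) as [d [Hder Hpos]];
      apply is_derive_Reals in Hder; rewrite (is_derive_unique _ _ _ Hder); auto; lra. }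
  destruct (Rle_dec (f a) L) as [|Hn]; auto; exfalso.
  set (eps := (f a - L) / 3); assert (He : 0 < eps) by (unfold eps; lra).
  destruct (Hr eps He) as [d1 [Hd1 H1]]; destruct (Hl eps He) as [d2 [Hd2 H2]].
  set (h1 := Rmin d1 (b - a)); set (h2 := Rmin d2 (b - a)).
  assert (0 < h1 <= d1 /\ h1 <= b - a)
    by (unfold h1; split; [split; [apply Rmin_pos|apply Rmin_l]|apply Rmin_r]; lra).
  assert (0 < h2 <= d2 /\ h2 <= b - a)
    by (unfold h2; split; [split; [apply Rmin_pos|apply Rmin_l]|apply Rmin_r]; lra).
  assert (A1 : Rabs (f (a + h1 / 3) - f a) < eps) by (apply H1; lra).
  assert (A2 : Rabs (f (b - h2 / 3) - L) < eps) by (apply H2; lra).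
  assert (A3 : f (a + h1 / 3) < f (b - h2 / 3)) by (apply Hinc; lra).
  apply Rabs_def2 in A1; apply Rabs_def2 in A2; unfold eps in *; lra.
Qed.

Lemma flow_below_goal_le_left_limit f th v a b L : a < b -> 0 < v ->
  right_cont f a -> left_limit f b L ->
  (forall t, a < t < b -> f t < th /\
     exists d, derivable_pt_lim f t d /\ (f t < th -> v < d)) -> f a <= L.
Proof.
  intros Hab Hv Hr Hl Hflow; apply increasing_flow_le_left_limit with b; auto.
  intros t Ht; destruct (Hflow t Ht) as [Hlt [d [Hder Hdv]]].
  exists d; split; [exact Hder|specialize (Hdv Hlt); lra].
Qed.

Lemma staircase (after before : nat -> R) (a0 d : R) (r : nat) :
  0 <= a0 -> a0 <= before 0%nat ->
  (forall n, (S n < r)%nat -> after n <= before (S n)) ->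
  (forall n, (n < r)%nat -> before n + d <= after n) ->
  forall n, (n < r)%nat -> INR (S n) * d <= after n.
Proof.
  intros Ha0 Hfirst Hflow Hjump n; induction n as [|n IH]; intros Hn.
  - specialize (Hjump O Hn); simpl; lra.
  - rewrite S_INR; specialize (Hjump (S n) Hn); specialize (Hflow n Hn).
    specialize (IH ltac:(lia)); lra.
Qed.

(* s i t = S_i(x_i(t)),  tt n = t_n,  pre n i = S_i(x_i(t_n^-)). *)
Theorem mainTheorem4
  (m : nat) (theta : nat -> R) (v : nat -> R) (Delta : nat -> nat -> R)
  (s : nat -> R -> R) (tt : nat -> R) (pre : nat -> nat -> R) :
  (2 <= m)%nat ->
  (forall i, (i < m)%nat -> 0 < theta i) ->
  (forall i, (i < m)%nat -> 0 < v i) ->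
  (forall i j, (i < m)%nat -> (j < m)%nat -> i <> j -> 0 < Delta i j) ->
  let r := r_bound m theta Delta in
  (* initial states *)
  (forall i, (i < m)%nat -> 0 <= s i 0 < theta i) ->
  (* the spiking instants t_0 < t_1 < ... < t_(r-1) exist *)
  0 < tt 0%nat ->
  (forall n, (S n < r)%nat -> tt n < tt (S n)) ->
  (* flow on [0, t_0): right-continuous at 0, no spike, dS/dt > v_i below goal *)
  (forall i, (i < m)%nat -> right_cont (s i) 0) ->
  (forall i t, (i < m)%nat -> 0 < t < tt 0%nat ->
     s i t < theta i /\
     exists d, derivable_pt_lim (s i) t d /\ (s i t < theta i -> v i < d)) ->
  (* flow on [t_n, t_(n+1)) *)
  (forall n i, (S n < r)%nat -> (i < m)%nat -> right_cont (s i) (tt n)) ->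
  (forall n i t, (S n < r)%nat -> (i < m)%nat -> tt n < t < tt (S n) ->
     s i t < theta i /\
     exists d, derivable_pt_lim (s i) t d /\ (s i t < theta i -> v i < d)) ->
  (* left limits at the spiking instants *)
  (forall n i, (n < r)%nat -> (i < m)%nat -> left_limit (s i) (tt n) (pre n i)) ->
  (* t_n is a spiking instant: I_0(t_n) is nonempty *)
  (forall n, (n < r)%nat -> exists i, (i < m)%nat /\ theta i <= pre n i) ->
  (* jump rule at t_n *)
  (forall n j, (n < r)%nat -> (j < m)%nat ->
     coalition m theta Delta (pre n) j -> s j (tt n) = 0) ->
  (forall n j, (n < r)%nat -> (j < m)%nat ->
     ~ coalition m theta Delta (pre n) j ->
     s j (tt n) = pre n j + coalition_input m theta Delta (pre n) j) ->
  forall j, (j < m)%nat ->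
    exists n, (n < r)%nat /\ coalition m theta Delta (pre n) j.
Proof.
  intros Hm Hth Hv HD r Hinit Ht0 Htt Hrc0 Hfl0 Hrc Hfl Hll Hsp _ Hjump j Hj.
  apply NNPP; intros Hnever.
  assert (Hout : forall n, (n < r)%nat -> ~ coalition m theta Delta (pre n) j)
    by (intros n Hn Hc; apply Hnever; exists n; auto).
  assert (Hr : (0 < r)%nat) by (unfold r, r_bound; lia).
  assert (Hdm : 0 < delta_min m Delta) by (apply delta_min_pos; auto).
  assert (Hclimb : forall n, (n < r)%nat ->
            INR (S n) * delta_min m Delta <= s j (tt n)).
  { apply staircase with (before := fun n => pre n j) (a0 := s j 0); simpl.
    - apply Hinit, Hj.
    - apply flow_below_goal_le_left_limit with (theta j) (v j) (tt 0%nat); auto.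
    - intros n Hn; apply flow_below_goal_le_left_limit with (theta j) (v j) (tt (S n)); auto.
      intros t Ht; apply (Hfl n j t); auto.
    - intros n Hn; rewrite Hjump by auto.
      apply Rplus_le_compat_l, coalition_input_ge_delta_min; auto.
      intros; apply Rlt_le, HD; auto. }
  assert (Hlast : s j (tt (pred r)) < theta j)
    by (rewrite Hjump by (auto; lia); apply outside_coalition_below_goal, Hout; lia).
  assert (Hgoal : theta j <= theta_max m theta) by (apply theta_max_ge; auto).
  assert (Hover := r_bound_spec m theta Delta Hdm ltac:(specialize (Hth j Hj); lra)).
  specialize (Hclimb (pred r) ltac:(lia)); replace (S (pred r)) with r in Hclimb by lia.
  fold r in Hover; lra.
Qed.
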